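(* Fix a $\rho$-flag on $V$ with adapted basis $v_1,\dots,v_n$; a $G$-graded structure on it is given by an arbitrary tuple $(h_1,\dots,h_n)\in G^n$ with $\deg v_i=h_i$. Let $\mathcal F$ and $\mathcal F'$ be the $G$-graded $\rho$-flags given by $(h_i)$ and $(h'_i)$. Then ${\rm END}(\mathcal F)\cong{\rm END}(\mathcal F')$ as $G$-graded algebras if and only if $(h_i)$ and $(h'_i)$ lie in the same orbit of the right action of the group $\prod_{\alpha\in\mathcal C}S(\alpha)\rtimes({\rm Aut}_0(\mathcal C)\ltimes G^q)$ on $G^n$ described in the context; equivalently, iff there exist $(\psi_\alpha)_{\alpha\in\mathcal C}\in\prod_{\alpha}S(\alpha)$, $g\in{\rm Aut}_0(\mathcal C)$ and $(\sigma_t)_{1\le t\le q}\in G^q$ such that $h'_i=h_{\psi_{g(\hat i)}(\tilde g(i))}\,\sigma_{p(i)}$ for all $1\le i\le n$, where $p(i)$ is the index with $\hat i\in\mathcal C^{p(i)}$. Thus the isomorphism classes of $G$-graded algebras ${\rm END}(\mathcal F)$, $\mathcal F$ a $G$-graded $\rho$-flag, correspond bijectively to the orbits of this action.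
   Context: Let $k$ be a field, $G$ a group, $\rho$ a preorder on $\{1,\dots,n\}$; $i\sim j$ iff $i\rho j$ and $j\rho i$; $\mathcal C$ is the set of classes, $\hat i$ the class of $i$, ordered by $\hat i\le\hat j$ iff $i\rho j$; $m_\alpha=|\alpha|$. A $\rho$-flag $(V,(V_\alpha)_{\alpha\in\mathcal C})$ is an $n$-dimensional $k$-space with subspaces $V_\alpha$ having a basis $v_1,\dots,v_n$ with $\{v_i:\hat i\le\alpha\}$ a basis of $V_\alpha$ for all $\alpha$ (adapted basis). A $G$-graded $\rho$-flag is a $\rho$-flag where $V$ is $G$-graded and the adapted basis is homogeneous. ${\rm END}(\mathcal F)$ is the algebra of linear $f:V\to V$ with $f(V_\alpha)\subseteq V_\alpha$, graded by ${\rm END}(\mathcal F)_\sigma=\{f: f(V_h)\subseteq V_{\sigma h}\ \forall h\in G\}$. ${\rm Aut}_0(\mathcal C)$ is the group of poset automorphisms $g$ of $\mathcal C$ with $m_{g(\alpha)}=m_\alpha$; for such $g$, $\tilde g\in S_n$ is given by: if $\alpha=\{i_1<\dots<i_r\}$ and $g(\alpha)=\{j_1<\dots<j_r\}$ then $\tilde g(i_s)=j_s$. $\mathcal C^1,\dots,\mathcal C^q$ are the connected components of $\mathcal C$ (of its comparability graph), and $\tau_g\in S_q$ is defined by $g(\mathcal C^t)=\mathcal C^{\tau_g(t)}$. $S(\alpha)$ is the symmetric group on the subset $\alpha\subseteq\{1,\dots,n\}$. Right actions on $G^n$: $(h_i)\leftarrow g=(h_{\tilde g(i)})_i$; $(h_i)\leftarrow(\sigma_t)=(h_i\sigma_{p(i)})_i$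 with $\hat i\in\mathcal C^{p(i)}$; $(h_i)\leftarrow(\psi_\alpha)=(h_{\psi_{\hat i}(i)})_i$. ${\rm Aut}_0(\mathcal C)$ acts on the right on $G^q$ by $(\sigma_t)\leftarrow g=(\sigma_{\tau_g(t)})_t$, giving ${\rm Aut}_0(\mathcal C)\ltimes G^q$; ${\rm Aut}_0(\mathcal C)$ acts on the left on $\prod_\alpha S(\alpha)$ by $g\to(\psi_\alpha)=(\psi'_\alpha)$ with $\psi'_\alpha(i)=\tilde g(\psi_{g^{-1}(\alpha)}(\tilde g^{-1}(i)))$ (and $G^q$ acts trivially), giving $\prod_\alpha S(\alpha)\rtimes({\rm Aut}_0(\mathcal C)\ltimes G^q)$. Its right action on $G^n$ is $(h_i)\leftarrow((\psi_\alpha)\rtimes(g\ltimes(\sigma_t)))=(((h_i)\leftarrow(\psi_\alpha))\leftarrow g)\leftarrow(\sigma_t)$. *)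

From HB Require Import structures.
From mathcomp Require Import all_boot all_order all_algebra all_fingroup.
Set Implicit Arguments. Unset Strict Implicit. Unset Printing Implicit Defensive.
Import GRing.Theory.
Local Open Scope ring_scope.

Definition is_group (G : Type) (mul : G -> G -> G) (one : G) (inv : G -> G) : Prop :=
  (forall x y z, mul x (mul y z) = mul (mul x y) z) /\
  (forall x, mul one x = x /\ mul x one = x) /\
  (forall x, mul (inv x) x = one /\ mul x (inv x) = one).

Section Classes.
Variables (n : nat) (rho : rel 'I_n).

(* rho is a preorder on {1,...,n} (here 'I_n = {0,...,n-1}) *)
Definition preorder_rel : Prop := reflexive rho /\ transitive rho.

Definition cls (i : 'I_n) : {set 'I_n} := [set j | rho i j && rho j i].

Definition classes : {set {set 'I_n}} := [set cls i | i : 'I_n].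

Definition cle (a b : {set 'I_n}) : bool :=
  [exists i, exists j, [&& i \in a, j \in b & rho i j]].

Definition comp_rel (a b : {set 'I_n}) : bool :=
  [&& a \in classes, b \in classes & cle a b || cle b a].

Definition component (i : 'I_n) : {set {set 'I_n}} :=
  [set b | connect comp_rel (cls i) b].

Definition Aut0 (g : {set 'I_n} -> {set 'I_n}) : Prop :=
  (forall a, a \in classes -> g a \in classes) /\
  {in classes &, injective g} /\
  {in classes &, forall a b, cle (g a) (g b) = cle a b} /\
  (forall a, a \in classes -> #|g a| = #|a|).

(* \tilde g : the s-th smallest element of \hat i goes to the s-th smallest
   element of g(\hat i)  (enum of a set of ordinals lists it increasingly) *)
Definition gtilde (g : {set 'I_n} -> {set 'I_n}) (i : 'I_n) : 'I_n :=
  nth i (enum (g (cls i))) (index i (enum (cls i))).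

Definition Sfam (psi : {set 'I_n} -> {perm 'I_n}) : Prop :=
  forall a, a \in classes -> perm_on a (psi a).

Variables (G : Type) (mul : G -> G -> G).

Definition actS (h : 'I_n -> G) (psi : {set 'I_n} -> {perm 'I_n}) : 'I_n -> G :=
  fun i => h (psi (cls i) i).
Definition actAut (h : 'I_n -> G) (g : {set 'I_n} -> {set 'I_n}) : 'I_n -> G :=
  fun i => h (gtilde g i).
(* (sigma_t) in G^q is indexed directly by the connected components *)
Definition actG (h : 'I_n -> G) (sigma : {set {set 'I_n}} -> G) : 'I_n -> G :=
  fun i => mul (h i) (sigma (component i)).

Definition act h psi g sigma : 'I_n -> G := actG (actAut (actS h psi) g) sigma.

Definition same_orbit (h h' : 'I_n -> G) : Prop :=
  exists psi g sigma, Sfam psi /\ Aut0 g /\ h' = act h psi g sigma.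

End Classes.

Section Flags.
Variables (k : fieldType) (n : nat) (rho : rel 'I_n) (B : 'M[k]_n).
(* V = k^n (row vectors); the adapted basis v_i = row i B; f(v) = v *m A *)

Definition in_span (P : 'I_n -> Prop) (v : 'rV[k]_n) : Prop :=
  exists c : 'I_n -> k, (forall i, ~ P i -> c i = 0) /\
                        v = \sum_i c i *: row i B.

Definition flag_sub (a : {set 'I_n}) : 'rV[k]_n -> Prop :=
  in_span (fun i => cle rho (cls rho i) a).

Definition END (A : 'M[k]_n) : Prop :=
  forall a, a \in classes rho -> forall v, flag_sub a v -> flag_sub a (v *m A).

Variables (G : Type) (mul : G -> G -> G).

Definition ENDg (h : 'I_n -> G) (s : G) (A : 'M[k]_n) : Prop :=
  END A /\ forall (x : G) v, in_span (fun i => h i = x) v ->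
                             in_span (fun i => h i = mul s x) (v *m A).

Definition graded_iso (h h' : 'I_n -> G) : Prop :=
  exists phi : 'M[k]_n -> 'M[k]_n,
    (forall A, END A -> END (phi A)) /\
    (forall A1 A2, END A1 -> END A2 -> phi A1 = phi A2 -> A1 = A2) /\
    (forall A', END A' -> exists A, END A /\ phi A = A') /\
    (forall (c : k) A1 A2, END A1 -> END A2 ->
        phi (c *: A1 + A2) = c *: phi A1 + phi A2) /\
    (forall A1 A2, END A1 -> END A2 -> phi (A1 *m A2) = phi A1 *m phi A2) /\
    phi 1%:M = 1%:M /\
    (forall s A, END A -> (ENDg h s A <-> ENDg h' s (phi A))).

End Flags.

From Pilot Require Import Defs.
From HB Require Import structures.
From mathcomp Require Import all_boot all_order all_algebra all_fingroup.
From Stdlib Require Import Classical FunctionalExtensionality.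
Set Implicit Arguments. Unset Strict Implicit. Unset Printing Implicit Defensive.
Import GRing.Theory.
Local Open Scope ring_scope.

(* In the adapted basis, END(F) is the incidence algebra of rho in M_n(k), and its
   component of degree s is spanned by the matrix units E_ij with h j = s * h i.
   A graded isomorphism sends the E_ii to a complete family of orthogonal rank-one
   idempotents of degree one; conjugating by a unit of degree one of the incidence
   algebra moves them back onto diagonal units E_(s i)(s i) for a permutation s.
   Then s preserves rho and changes degrees by a factor constant along rho, hence on
   connected components, which is exactly being in the same orbit.  Conversely, such
   a relabelling t of the basis gives the graded isomorphism M |-> (M (t a) (t b)). *)

Section Preorder.
Variables (n : nat) (rho : rel 'I_n).
Hypothesis rho_preorder : preorder_rel rho.

Lemma rho_refl : reflexive rho. Proof. by case: rho_preorder. Qed.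

Lemma rho_trans x y z : rho x y -> rho y z -> rho x z.
Proof. by case: rho_preorder => _; apply. Qed.

Lemma mem_cls i : i \in cls rho i.
Proof. by rewrite inE rho_refl. Qed.

Lemma cls_of_mem i j : j \in cls rho i -> cls rho j = cls rho i.
Proof.
rewrite inE => /andP[Hij Hji]; apply/setP=> x; rewrite !inE.
apply/andP/andP=> [][H1 H2]; split.
- exact: rho_trans Hij H1.
- exact: rho_trans H2 Hji.
- exact: rho_trans Hji H1.
- exact: rho_trans H2 Hij.
Qed.

Lemma eq_cls i j : cls rho i = cls rho j -> rho i j /\ rho j i.
Proof. by move=> E; have := mem_cls j; rewrite -E inE => /andP. Qed.

Lemma cle_cls i j : cle rho (cls rho i) (cls rho j) = rho i j.
Proof.
apply/existsP/idP=> [[x /existsP[y /and3P[Hx Hy Hxy]]]|Hij].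
- move: Hx Hy; rewrite !inE => /andP[Hix _] /andP[_ Hyj].
  exact: rho_trans (rho_trans Hix Hxy) Hyj.
- by exists i; apply/existsP; exists j; rewrite !mem_cls Hij.
Qed.

Lemma cls_in_classes i : cls rho i \in Defs.classes rho.
Proof. by apply/imsetP; exists i. Qed.

Lemma classesP a : a \in Defs.classes rho -> exists x, a = cls rho x.
Proof. by case/imsetP=> x _ ->; exists x. Qed.

Lemma comp_rel_sym : symmetric (comp_rel rho).
Proof. by move=> a b; rewrite /comp_rel andbCA orbC. Qed.

Lemma component_rel a b : rho a b -> component rho a = component rho b.
Proof.
move=> Hab.
have Eab : connect (comp_rel rho) (cls rho a) (cls rho b).
  by apply: connect1; rewrite /comp_rel !cls_in_classes cle_cls Hab.
have Esym := sym_connect_sym comp_rel_sym.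
apply/setP => c; rewrite !inE; apply/idP/idP => Hc.
- by apply: connect_trans Hc; rewrite Esym.
- exact: connect_trans Eab Hc.
Qed.

Lemma component_const (T : Type) (d : 'I_n -> T) :
  (forall a b, rho a b -> d a = d b) ->
  forall x i, component rho x = component rho i -> d x = d i.
Proof.
move=> Hd x i Ec.
have : connect (comp_rel rho) (cls rho x) (cls rho i).
  have : cls rho i \in component rho i by rewrite inE connect0.
  by rewrite -Ec inE.
case/connectP => p; elim: p x {Ec} => [|b p IH] x /=.
  by move=> _ /esym/eq_cls [Hxi _]; apply: Hd.
case/andP => /and3P [_ /classesP [y ->] Hxy] Hp Hl.
suff -> : d x = d y by apply: IH Hp Hl.
by case/orP: Hxy; rewrite cle_cls => H; [apply: Hd | apply/esym/Hd].
Qed.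

Section Aut0.
Variable g : {set 'I_n} -> {set 'I_n}.
Hypothesis g_Aut0 : Aut0 rho g.

Lemma gtilde_mem i : gtilde rho g i \in g (cls rho i).
Proof.
case: g_Aut0 => _ [_ [_ g_card]].
rewrite /gtilde -mem_enum mem_nth // -cardE g_card ?cls_in_classes //.
by rewrite cardE index_mem mem_enum mem_cls.
Qed.

Lemma cls_gtilde i : cls rho (gtilde rho g i) = g (cls rho i).
Proof.
case: g_Aut0 => g_classes _.
have [x Ex] := classesP (g_classes _ (cls_in_classes i)).
by rewrite Ex; apply: cls_of_mem; rewrite -Ex gtilde_mem.
Qed.

Lemma gtilde_inj : injective (gtilde rho g).
Proof.
move=> i j E; case: g_Aut0 => _ [g_inj [_ g_card]].
have Ec : cls rho i = cls rho j.
  by apply: g_inj; rewrite ?cls_in_classes // -!cls_gtilde E.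
move: E; rewrite /gtilde Ec.
set s := enum (g (cls rho j)); set e := enum (cls rho j).
have e_size : size s = size e by rewrite /s /e -!cardE g_card ?cls_in_classes.
have ie : i \in e by rewrite mem_enum -Ec mem_cls.
have je : j \in e by rewrite mem_enum mem_cls.
rewrite (set_nth_default j) ?e_size ?index_mem // => /eqP.
rewrite nth_uniq ?enum_uniq ?e_size ?index_mem // => /eqP E.
by rewrite -(nth_index j ie) E nth_index.
Qed.

End Aut0.
End Preorder.

Section Supports.
Variables (k : fieldType) (n : nat).
Implicit Types (R S : 'I_n -> 'I_n -> Prop) (M N : 'M[k]_n).

Definition supported R M := forall i j, M i j != 0 -> R i j.

Lemma sumr_neq0_exists (I : finType) (F : I -> k) :
  \sum_i F i != 0 -> exists i, F i != 0.
Proof.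
move=> H; apply: NNPP => nE; move/negP: H; apply.
apply/eqP; apply: big1 => i _.
by apply/eqP; apply: NNPP => Hi; apply: nE; exists i; apply/negP.
Qed.

Lemma mulmx_neq0_exists M N i j :
  (M *m N) i j != 0 -> exists l, M i l != 0 /\ N l j != 0.
Proof.
rewrite mxE => /sumr_neq0_exists [l].
by rewrite mulf_eq0 negb_or => /andP[? ?]; exists l.
Qed.

Lemma supported0 R : supported R 0.
Proof. by move=> i j; rewrite mxE eqxx. Qed.

Lemma supported1 R : (forall i, R i i) -> supported R 1%:M.
Proof.
by move=> HR i j; rewrite mxE; case: (i =P j) => [<- _|_]; rewrite ?eqxx.
Qed.

Lemma supportedD R M N : supported R M -> supported R N -> supported R (M + N).
Proof.
move=> HM HN i j; rewrite mxE.
have [E|/HM //] := eqVneq (M i j) 0.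
by rewrite E add0r; apply: HN.
Qed.

Lemma supportedZ R c M : supported R M -> supported R (c *: M).
Proof. by move=> HM i j; rewrite mxE mulf_eq0 negb_or => /andP[_ /HM]. Qed.

Lemma supported_sum R (I : finType) (F : I -> 'M[k]_n) :
  (forall i, supported R (F i)) -> supported R (\sum_i F i).
Proof.
by move=> HF; apply: (big_ind (supported R)); [apply: supported0 | apply: supportedD |].
Qed.

Lemma supportedM R S (T : 'I_n -> 'I_n -> Prop) M N :
  (forall i l j, R i l -> S l j -> T i j) ->
  supported R M -> supported S N -> supported T (M *m N).
Proof.
by move=> HT HM HN i j /mulmx_neq0_exists [l [/HM Ril /HN Slj]]; apply: HT Slj.
Qed.

Lemma supported_delta R i j : R i j -> supported R (delta_mx i j).
Proof.
move=> Rij a b; rewrite mxE.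
by case: (a =P i) => [->|_]; case: (b =P j) => [->|_]; rewrite ?eqxx.
Qed.

End Supports.

Definition incid (k : fieldType) n (rho : rel 'I_n) (M : 'M[k]_n) :=
  supported (fun i j => rho j i) M.
Definition homog (k : fieldType) n G (mul : G -> G -> G) (h : 'I_n -> G) s
  (M : 'M[k]_n) := supported (fun i j => h j = mul s (h i)) M.

Section FlagCoordinates.
Variables (k : fieldType) (n : nat) (B : 'M[k]_n).
Hypothesis B_unit : B \in unitmx.

Lemma in_spanE (P : 'I_n -> Prop) v :
  in_span B P v <-> forall j, ~ P j -> (v *m invmx B) 0 j = 0.
Proof.
split.
- case=> c [Hc ->] j Pj.
  have -> : \sum_i c i *: row i B = (\row_i c i) *m B.
    by rewrite mulmx_sum_row; apply: eq_bigr => i _; rewrite mxE.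
  by rewrite mulmxK // mxE Hc.
- move=> H; exists (fun j => (v *m invmx B) 0 j); split; first exact: H.
  by rewrite -mulmx_sum_row mulmxKV.
Qed.

Lemma preserves_spanE (X : Type) (C : X -> Prop) (P Q : X -> 'I_n -> Prop) A :
  (forall x, C x -> forall v, in_span B (P x) v -> in_span B (Q x) (v *m A)) <->
  supported (fun i j => forall x, C x -> P x i -> Q x j) (conjmx B A).
Proof.
rewrite conjumx //; set M := B *m A *m invmx B.
have coordM w : (w *m B) *m A *m invmx B = w *m M by rewrite /M !mulmxA.
split.
- move=> H i j Mij x Cx Pxi; apply: NNPP => nQ.
  have /H : in_span B (P x) (delta_mx 0 i *m B).
    apply/in_spanE => l nPl; rewrite mulmxK // mxE eqxx /=.
    by case: eqP => // Eli; case: nPl; rewrite Eli.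
  move=> /(_ Cx)/in_spanE/(_ j nQ); rewrite coordM -rowE mxE => E.
  by move: Mij; rewrite E eqxx.
- move=> H x Cx v /in_spanE Hv; apply/in_spanE => j nQ.
  rewrite -{1}(mulmxKV B_unit v) coordM mxE; apply: big1 => i _.
  have [->|wi] := eqVneq ((v *m invmx B) 0 i) 0; first by rewrite mul0r.
  have [->|Mi] := eqVneq (M i j) 0; first by rewrite mulr0.
  exfalso; apply: nQ; apply: (H i j Mi x Cx); apply: NNPP => nP.
  by move: wi; rewrite Hv ?eqxx.
Qed.

Variable rho : rel 'I_n.
Hypothesis rho_preorder : preorder_rel rho.

Lemma END_incid A : END rho B A <-> incid rho (conjmx B A).
Proof.
apply: iff_trans (preserves_spanE (fun a => a \in Defs.classes rho)
   (fun a i => cle rho (cls rho i) a) (fun a i => cle rho (cls rho i) a) A) _.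
split=> H i j Mij.
- have := H i j Mij _ (cls_in_classes rho i).
  by rewrite !cle_cls // => /(_ (rho_refl rho_preorder i)).
- move=> a /classesP [y ->]; rewrite !cle_cls //.
  by apply: rho_trans => //; apply: H.
Qed.

Variables (G : Type) (mul : G -> G -> G).

Lemma ENDg_homog h s A :
  ENDg rho B mul h s A <-> END rho B A /\ homog mul h s (conjmx B A).
Proof.
have := preserves_spanE (fun _ => True) (fun x i => h i = x)
  (fun x j => h j = mul s x) A.
case=> to_supp of_supp; split=> -[HA Hs]; split=> //.
- by move=> i j Mij; apply: (to_supp (fun x _ => Hs x) i j Mij (h i) I erefl).
- by move=> x; apply: (of_supp _ x I) => i j Mij y _ <-; apply: Hs.
Qed.

End FlagCoordinates.

Section GroupLaws.
Variables (G : Type) (mul : G -> G -> G) (one : G) (inv : G -> G).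
Hypothesis HG : is_group mul one inv.

Lemma gmulA x y z : mul x (mul y z) = mul (mul x y) z. Proof. by case: HG. Qed.
Lemma gmul1l x : mul one x = x. Proof. by case: HG => _ [/(_ x) []]. Qed.
Lemma gmul1r x : mul x one = x. Proof. by case: HG => _ [/(_ x) []]. Qed.
Lemma gmulVl x : mul (inv x) x = one. Proof. by case: HG => _ [_ /(_ x) []]. Qed.
Lemma gmulVr x : mul x (inv x) = one. Proof. by case: HG => _ [_ /(_ x) []]. Qed.
Lemma gmulKl x y : mul (inv x) (mul x y) = y.
Proof. by rewrite gmulA gmulVl gmul1l. Qed.
Lemma gmulKVl x y : mul x (mul (inv x) y) = y.
Proof. by rewrite gmulA gmulVr gmul1l. Qed.
Lemma gmulKr x y : mul (mul y x) (inv x) = y.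
Proof. by rewrite -gmulA gmulVr gmul1r. Qed.
Lemma gmulKVr x y : mul (mul y (inv x)) x = y.
Proof. by rewrite -gmulA gmulVl gmul1r. Qed.
Lemma gmulIr x y z : mul y x = mul z x -> y = z.
Proof. by move=> E; rewrite -(gmulKr x y) E gmulKr. Qed.

Variables (k : fieldType) (n : nat) (h : 'I_n -> G).

Lemma homog1 : homog mul h one (1%:M : 'M[k]_n).
Proof. by apply: supported1 => i; rewrite gmul1l. Qed.

Lemma homogM s t (M N : 'M[k]_n) :
  homog mul h s M -> homog mul h t N -> homog mul h (mul t s) (M *m N).
Proof. by apply: supportedM => i l j -> ->; rewrite gmulA. Qed.

Lemma homog_delta i j :
  homog mul h (mul (h j) (inv (h i))) (delta_mx i j : 'M[k]_n).
Proof. by apply: supported_delta; rewrite gmulKVr. Qed.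

End GroupLaws.

Lemma incid1 (k : fieldType) n (rho : rel 'I_n) :
  preorder_rel rho -> incid rho (1%:M : 'M[k]_n).
Proof. by move=> Hrho; apply: supported1; apply: rho_refl. Qed.

Lemma incidM (k : fieldType) n (rho : rel 'I_n) (M N : 'M[k]_n) :
  preorder_rel rho -> incid rho M -> incid rho N -> incid rho (M *m N).
Proof. by move=> Hrho; apply: supportedM => i l j Hli Hjl; apply: rho_trans Hjl Hli. Qed.

Section ConjUnit.
Variables (k : fieldType) (n : nat) (V : 'M[k]_n).
Hypothesis V_unit : V \in unitmx.

Lemma conjumxM A C : conjmx V (A *m C) = conjmx V A *m conjmx V C.
Proof. by rewrite !conjumx // !mulmxA mulmxKV. Qed.

Lemma conjumx_lin c A C : conjmx V (c *: A + C) = c *: conjmx V A + conjmx V C.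
Proof. by rewrite !conjumx // mulmxDr mulmxDl -scalemxAr -scalemxAl. Qed.

Lemma conjumx1 : conjmx V 1%:M = 1%:M.
Proof. by rewrite conjmx_scalar ?row_free_unit. Qed.

End ConjUnit.

Record incidence_iso (k : fieldType) n (rho : rel 'I_n) (G : Type)
    (mul : G -> G -> G) (h h' : 'I_n -> G) (Phi : 'M[k]_n -> 'M[k]_n) : Prop := {
  iso_incid : forall M, incid rho M -> incid rho (Phi M);
  iso_inj : forall M1 M2, incid rho M1 -> incid rho M2 -> Phi M1 = Phi M2 -> M1 = M2;
  iso_surj : forall M', incid rho M' -> exists M, incid rho M /\ Phi M = M';
  iso_lin : forall c M1 M2, incid rho M1 -> incid rho M2 ->
    Phi (c *: M1 + M2) = c *: Phi M1 + Phi M2;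
  iso_mul : forall M1 M2, incid rho M1 -> incid rho M2 ->
    Phi (M1 *m M2) = Phi M1 *m Phi M2;
  iso_one : Phi 1%:M = 1%:M;
  iso_homog : forall s M, incid rho M ->
    (homog mul h s M <-> homog mul h' s (Phi M))
}.

Section GradedIsoCoordinates.
Variables (k : fieldType) (n : nat) (B : 'M[k]_n).
Hypothesis B_unit : B \in unitmx.
Variable rho : rel 'I_n.
Hypothesis rho_preorder : preorder_rel rho.
Variables (G : Type) (mul : G -> G -> G) (h h' : 'I_n -> G).

Let Bi_unit : invmx B \in unitmx. Proof. by rewrite unitmx_inv. Qed.

Lemma END_conjVmx M : END rho B (conjmx (invmx B) M) <-> incid rho M.
Proof. by rewrite END_incid // conjmxVK. Qed.

Lemma incidence_iso_of_graded :
  graded_iso rho B mul h h' -> exists Phi : 'M[k]_n -> 'M[k]_n, incidence_iso rho mul h h' Phi.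
Proof.
case=> phi [END_phi [inj_phi [surj_phi [lin_phi [mul_phi [one_phi homog_phi]]]]]].
exists (fun M => conjmx B (phi (conjmx (invmx B) M))); split.
- by move=> M /END_conjVmx /END_phi /END_incid; apply.
- move=> M1 M2 /END_conjVmx E1 /END_conjVmx E2 /(congr1 (conjmx (invmx B))).
  rewrite !conjmxK // => /(inj_phi _ _ E1 E2) /(congr1 (conjmx B)).
  by rewrite !conjmxVK.
- move=> M' /END_conjVmx /surj_phi [A [EA phiA]].
  exists (conjmx B A); rewrite conjmxK // phiA conjmxVK //.
  by split=> //; apply/END_incid.
- move=> c M1 M2 /END_conjVmx E1 /END_conjVmx E2.
  by rewrite conjumx_lin // lin_phi // conjumx_lin.
- move=> M1 M2 /END_conjVmx E1 /END_conjVmx E2.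
  by rewrite conjumxM // mul_phi // conjumxM.
- by rewrite conjumx1 // one_phi conjumx1.
- move=> s M /END_conjVmx EM; have := homog_phi s _ EM.
  rewrite !ENDg_homog // conjmxVK // => -[to' of'].
  split=> Hs; first by case: (to' (conj EM Hs)).
  by case: of' => //; split=> //; apply: END_phi.
Qed.

Lemma graded_iso_of_incidence (Phi : 'M[k]_n -> 'M[k]_n) :
  incidence_iso rho mul h h' Phi -> graded_iso rho B mul h h'.
Proof.
case=> incid_Phi inj_Phi surj_Phi lin_Phi mul_Phi one_Phi homog_Phi.
have ENDE A : END rho B A <-> incid rho (conjmx B A) by apply: END_incid.
exists (fun A => conjmx (invmx B) (Phi (conjmx B A))).
split; [|split; [|split; [|split; [|split; [|split]]]]].
- by move=> A /ENDE /incid_Phi /END_conjVmx.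
- move=> A1 A2 /ENDE E1 /ENDE E2 /(congr1 (conjmx B)).
  rewrite !conjmxVK // => /(inj_Phi _ _ E1 E2).
  by move/(congr1 (conjmx (invmx B))); rewrite !conjmxK.
- move=> A' /ENDE /surj_Phi [M [EM PhiM]].
  exists (conjmx (invmx B) M); rewrite conjmxVK // PhiM conjmxK //.
  by split=> //; apply/END_conjVmx.
- move=> c A1 A2 /ENDE E1 /ENDE E2.
  by rewrite conjumx_lin // lin_Phi // conjumx_lin.
- move=> A1 A2 /ENDE E1 /ENDE E2.
  by rewrite conjumxM // mul_Phi // conjumxM.
- by rewrite conjumx1 // one_Phi conjumx1.
- move=> s A EA; have := homog_Phi s _ (proj1 (ENDE A) EA).
  rewrite !ENDg_homog // conjmxVK // => H.
  split=> -[_ Hs]; last by split=> //; apply/H.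
  by split; [apply/END_conjVmx/incid_Phi/ENDE | apply/H].
Qed.

End GradedIsoCoordinates.

Lemma invmx_closed (k : fieldType) n (P : 'M[k]_n -> Prop) :
  P 1%:M -> (forall a M N, P M -> P N -> P (a *: M + N)) ->
  (forall M N, P M -> P N -> P (M *m N)) ->
  forall U, U \in unitmx -> P U -> P (invmx U).
Proof.
move=> P1 PL PM; case: n P P1 PL PM => [|n'] P P1 PL PM U HU PU.
  by rewrite [invmx U]thinmx0 -[0 : 'M_0](thinmx0 1%:M).
have P0 : P 0 by have := PL (-1) _ _ P1 P1; rewrite scaleN1r addNr.
have PC c : P c%:M by have := PL c _ _ P1 P0; rewrite addr0 scalemx1.
have Phorner q : P (horner_mx U q).
  elim/poly_ind: q => [|q c IH]; first by rewrite rmorph0.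
  rewrite rmorphD rmorphM /= horner_mx_X horner_mx_C.
  by have := PL 1 _ _ (PM _ _ IH PU) (PC c); rewrite scale1r.
(* Cayley-Hamilton: q(U) U = -p(0), with p the characteristic polynomial of U. *)
set p := char_poly U; set q := drop_poly 1 p.
have Ht : take_poly 1 p = (p`_0)%:P.
  by rewrite /take_poly poly_def big_ord1 expr0 alg_polyC.
have Eq : horner_mx U q *m U = - (p`_0)%:M.
  have CH : horner_mx U p = 0 := Cayley_Hamilton U.
  rewrite -(poly_take_drop 1 p) Ht rmorphD rmorphM /= in CH.
  rewrite expr1 horner_mx_X horner_mx_C in CH.
  by move/eqP: CH; rewrite addrC addr_eq0 => /eqP.
have p0 : p`_0 != 0.
  rewrite /p char_poly_det mulf_eq0 negb_or signr_eq0 /=.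
  by rewrite -unitfE -unitmxE.
have -> : invmx U = (- (p`_0)^-1) *: horner_mx U q + 0.
  rewrite addr0 -[RHS](mulmxK HU) -scalemxAl Eq scalerN scaleNr opprK.
  by rewrite -scalemx1 scalerA mulVf // scale1r mul1mx.
exact: PL.
Qed.

Section MatrixUnits.
Variables (k : fieldType) (n : nat).

Lemma delta_mx_sandwich (M : 'M[k]_n) (i j l m : 'I_n) :
  delta_mx i j *m M *m delta_mx l m = M j l *: delta_mx i m.
Proof.
rewrite -(mul_delta_mx (0 : 'I_1) i j) -(mul_delta_mx (0 : 'I_1) l m).
rewrite !mulmxA -(mulmxA _ _ M) -(mulmxA _ (_ *m M)).
rewrite [delta_mx 0 j *m M *m _]mx11_scalar -rowE -colE !mxE.
by rewrite mul_mx_scalar -scalemxAl mul_delta_mx.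
Qed.

Lemma outer_mx_neq0 (u : 'cV[k]_n) (v : 'rV[k]_n) :
  u != 0 -> v != 0 -> u *m v != 0.
Proof.
move=> /matrix0Pn [a [x ua]] /matrix0Pn [y [b vb]].
apply/matrix0Pn; exists a, b; rewrite !mxE big_ord1.
by rewrite (ord1 x) (ord1 y) in ua vb; rewrite mulf_neq0.
Qed.

(* An idempotent e with e E_ll e in k e for all l is an outer product: pick l with
   e E_ll e = c e, c != 0, and factor E_ll = E_l0 E_0l. *)
Lemma idem_rank1 (e : 'M[k]_n) :
  e *m e = e -> e != 0 ->
  (forall l, exists c, e *m delta_mx l l *m e = c *: e) ->
  exists (u : 'cV[k]_n) (v : 'rV[k]_n), e = u *m v.
Proof.
move=> e_idem e_neq0 /fin_all_exists [c Ec].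
have e_sum : e = (\sum_l c l) *: e.
  transitivity (e *m 1%:M *m e); first by rewrite mulmx1 e_idem.
  rewrite (scalar_mx_sum_delta _ 1) mulmx_sumr mulmx_suml scaler_suml.
  by apply: eq_bigr => l _; rewrite scale1r Ec.
have [l cl] : exists l, c l != 0.
  by apply: sumr_neq0_exists; apply: contraNneq e_neq0 => c0; rewrite e_sum c0 scale0r.
exists ((c l)^-1 *: (e *m delta_mx l 0)), (delta_mx 0 l *m e).
rewrite -scalemxAl -mulmxA (mulmxA (delta_mx l 0)) mul_delta_mx mulmxA Ec.
by rewrite scalerA mulVf // scale1r.
Qed.

End MatrixUnits.

Section OrthogonalIdempotents.
Variables (k : fieldType) (n : nat) (f : 'I_n -> 'M[k]_n).
Hypothesis f_orth : forall i j, f i *m f j = if i == j then f i else 0.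

Definition align_mx (s : 'S_n) := \sum_i delta_mx (s i) (s i) *m f i.

Lemma align_mxE s j : align_mx s *m f j = delta_mx (s j) (s j) *m align_mx s.
Proof.
rewrite /align_mx mulmx_suml mulmx_sumr; transitivity (delta_mx (s j) (s j) *m f j).
- rewrite (bigD1 j) //= -mulmxA f_orth eqxx big1 ?addr0 // => i nij.
  by rewrite -mulmxA f_orth (negbTE nij) mulmx0.
- rewrite (bigD1 j) //= mulmxA mul_delta_mx big1 ?addr0 // => i nij.
  rewrite mulmxA mul_delta_mx_cond (inj_eq perm_inj) eq_sym (negbTE nij).
  by rewrite mulr0n mul0mx.
Qed.

Hypothesis f_sum : \sum_i f i = 1%:M.
Hypothesis f_neq0 : forall i, f i != 0.

Section Factored.
Variables (u : 'I_n -> 'cV[k]_n) (v : 'I_n -> 'rV[k]_n).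
Hypothesis f_uv : forall i, f i = u i *m v i.

Lemma rank1_dual i j : (v i *m u j) 0 0 = (i == j)%:R.
Proof.
have u0 : u i != 0 by apply/eqP => u0; move: (f_neq0 i); rewrite f_uv u0 mul0mx eqxx.
have v0 : v j != 0 by apply/eqP => v0; move: (f_neq0 j); rewrite f_uv v0 mulmx0 eqxx.
have E := f_orth i j; rewrite !f_uv mulmxA -(mulmxA (u i)) in E.
rewrite [v i *m u j]mx11_scalar mul_mx_scalar -scalemxAl in E.
case: (i =P j) E => [<-|/eqP nij] E.
- apply/eqP; rewrite -subr_eq0; apply/eqP.
  have /eqP : ((v i *m u i) 0 0 - 1) *: (u i *m v i) = 0.
    by rewrite scalerBl E scale1r subrr.
  by rewrite scalemx_eq0 -f_uv (negbTE (f_neq0 i)) orbF => /eqP.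
- move/eqP: E; rewrite scalemx_eq0 (negbTE (outer_mx_neq0 u0 v0)) orbF.
  by move/eqP.
Qed.

(* The u i form a basis (the v i are the dual basis), so the matrix with columns
   u i has a nonzero diagonal term in its Leibniz expansion. *)
Lemma exists_perm_diag_neq0 : exists s : 'S_n, forall i, u i (s i) 0 != 0.
Proof.
pose Q := \matrix_(a, i) u i a 0 : 'M[k]_n.
pose P := \matrix_(i, b) v i 0 b : 'M[k]_n.
have PQ : P *m Q = 1%:M.
  apply/matrixP => i j; rewrite !mxE -rank1_dual mxE.
  by apply: eq_bigr => a _; rewrite !mxE.
have detQ : \det Q != 0.
  apply: contraTneq isT => detQ0; have := congr1 determinant PQ.
  by rewrite det_mulmx detQ0 mulr0 det1 => /eqP; rewrite eq_sym oner_eq0.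
move: detQ; rewrite -det_tr => /sumr_neq0_exists [s].
rewrite mulf_eq0 negb_or => /andP[_ Hs]; exists s => i.
apply: contraNneq Hs => u0; by rewrite (bigD1 i) //= !mxE u0 mul0r.
Qed.

Lemma align_mx_unit (s : 'S_n) : (forall i, u i (s i) 0 != 0) -> align_mx s \in unitmx.
Proof.
move=> us.
pose W := \sum_i (u i (s i) 0)^-1 *: (u i *m delta_mx 0 (s i)).
suff /mulmx1_unit [] : W *m align_mx s = 1%:M by [].
rewrite mulmx_suml -f_sum; apply: eq_bigr => i _.
rewrite -scalemxAl mulmx_sumr (bigD1 i) //= big1 ?addr0.
- rewrite !mulmxA -(mulmxA (u i)) mul_delta_mx f_uv mulmxA.
  rewrite -(mulmxA (u i) (delta_mx 0 (s i))) [delta_mx 0 _ *m u i]mx11_scalar.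
  rewrite -rowE mxE mul_mx_scalar -scalemxAl scalerA mulVf ?scale1r //.
- move=> j nji; rewrite !mulmxA -(mulmxA (u i)) mul_delta_mx_cond (inj_eq perm_inj).
  by rewrite eq_sym (negbTE nji) mulr0n mulmx0 mul0mx.
Qed.

End Factored.

Hypothesis f_rank1 : forall i, exists (u : 'cV[k]_n) (v : 'rV[k]_n), f i = u *m v.

Lemma exists_align_unit : exists s : 'S_n, align_mx s \in unitmx.
Proof.
have [u /fin_all_exists [v f_uv]] := fin_all_exists f_rank1.
have [s us] := exists_perm_diag_neq0 f_uv.
by exists s; apply: align_mx_unit f_uv s us.
Qed.

End OrthogonalIdempotents.

Section IncidenceIsoPerm.
Variables (k : fieldType) (n : nat) (rho : rel 'I_n).
Hypothesis rho_preorder : preorder_rel rho.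
Variables (G : Type) (mul : G -> G -> G) (one : G) (inv : G -> G).
Hypothesis HG : is_group mul one inv.
Variables (h h' : 'I_n -> G) (Phi : 'M[k]_n -> 'M[k]_n).
Hypothesis Phi_iso : incidence_iso rho mul h h' Phi.

Local Notation E i := (delta_mx i i : 'M[k]_n).
Local Notation f i := (Phi (E i)).

Let incid0 : incid rho (0 : 'M[k]_n). Proof. exact: supported0. Qed.
Let incidE i : incid rho (E i). Proof. by apply: supported_delta; apply: rho_refl. Qed.
Let homogE h0 i : homog mul h0 one (E i).
Proof. by have := @homog_delta _ _ _ _ HG k n h0 i i; rewrite (gmulVr HG). Qed.

Lemma iso0 : Phi 0 = 0.
Proof.
have := iso_lin Phi_iso 1 incid0 incid0; rewrite !scale1r addr0 => E0.
by apply: (@addrI _ (Phi 0)); rewrite addr0 -E0.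
Qed.

Lemma isoZ c M : incid rho M -> Phi (c *: M) = c *: Phi M.
Proof. by move=> HM; have := iso_lin Phi_iso c HM incid0; rewrite !addr0 iso0 addr0. Qed.

Lemma iso_sum (I : finType) (F : I -> 'M[k]_n) :
  (forall i, incid rho (F i)) -> Phi (\sum_i F i) = \sum_i Phi (F i).
Proof.
move=> HF; suff [] : incid rho (\sum_i F i) /\ Phi (\sum_i F i) = \sum_i Phi (F i) by [].
apply: (big_rec2 (fun M N => incid rho M /\ Phi M = N)); first by split; last exact: iso0.
move=> i M _ _ [HM <-]; split; first exact: (supportedD (HF i) HM).
by have := iso_lin Phi_iso 1 (HF i) HM; rewrite !scale1r.
Qed.

Lemma iso_sandwich i j M : incid rho M ->
  Phi (E i *m M *m E j) = f i *m Phi M *m f j.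
Proof.
by move=> HM; rewrite !(iso_mul Phi_iso) //; apply: incidM => //; apply: incidM.
Qed.

Lemma iso_idem_orth i j : f i *m f j = if i == j then f i else 0.
Proof.
rewrite -(iso_mul Phi_iso) // mul_delta_mx_cond.
by case: (i =P j) => [->|_]; rewrite ?mulr1n ?mulr0n ?iso0.
Qed.

Lemma iso_idem_sum : \sum_i f i = 1%:M.
Proof.
rewrite -iso_sum // -(iso_one Phi_iso) (scalar_mx_sum_delta _ 1).
by congr Phi; apply: eq_bigr => l _; rewrite scale1r.
Qed.

Lemma iso_idem_neq0 i : f i != 0.
Proof.
apply/eqP => fi0; have : E i = 0 by apply: (iso_inj Phi_iso) => //; rewrite iso0.
by move/matrixP/(_ i i); rewrite !mxE !eqxx => /eqP; rewrite oner_eq0.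
Qed.

Lemma iso_idem_rank1 i : exists (u : 'cV[k]_n) (v : 'rV[k]_n), f i = u *m v.
Proof.
apply: idem_rank1; [by rewrite iso_idem_orth eqxx | exact: iso_idem_neq0 |] => l.
have [X [HX <-]] := iso_surj Phi_iso (@incidE l).
by exists (X i i); rewrite -iso_sandwich // delta_mx_sandwich isoZ.
Qed.

Section Aligned.
Variable s : 'S_n.
Let U := align_mx (fun i => f i) s.
Hypothesis U_unit : U \in unitmx.

Let U_incid : incid rho U.
Proof.
apply: supported_sum => i.
by apply: incidM; [|apply: incidE|apply: (iso_incid Phi_iso); apply: incidE].
Qed.

Let U_homog : homog mul h' one U.
Proof.
apply: supported_sum => i; rewrite -[one](gmul1l HG one).
apply: (homogM HG (@homogE h' (s i))).
by apply/(iso_homog Phi_iso); [apply: incidE | apply: homogE].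
Qed.

Let Ui_incid_homog : incid rho (invmx U) /\ homog mul h' one (invmx U).
Proof.
apply: (invmx_closed (P := fun M => incid rho M /\ homog mul h' one M)) => //.
- by split; [exact: incid1 rho_preorder | exact: (homog1 HG h' (k := k) (n := n))].
- move=> a M N [H1 H2] [H3 H4].
  by split; apply: supportedD => //; apply: supportedZ.
- move=> M N [H1 H2] [H3 H4]; split; first exact: incidM rho_preorder H1 H3.
  by have := homogM HG H2 H4; rewrite (gmul1l HG).
Qed.

Let fUi l : f l *m invmx U = invmx U *m E (s l).
Proof.
by rewrite -{1}[f l](mulKmx U_unit) (align_mxE iso_idem_orth) !mulmxA mulmxK.
Qed.

(* Since Phi E_ij = f i (Phi E_ij) f j, conjugating by U lands in k E_(s i)(s j). *)
Lemma align_conj_iso_delta i j : rho j i ->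
  exists2 c, c != 0 & U *m Phi (delta_mx i j) *m invmx U = c *: delta_mx (s i) (s j).
Proof.
move=> Hji; have Dij : incid rho (delta_mx i j : 'M[k]_n) by apply: supported_delta.
set F := Phi _; set Y := U *m F *m invmx U.
have FE : f i *m F *m f j = F.
  by rewrite -iso_sandwich // delta_mx_sandwich mxE !eqxx scale1r.
have YE : Y = Y (s i) (s j) *: delta_mx (s i) (s j).
  rewrite -delta_mx_sandwich /Y -{1}FE !mulmxA (align_mxE iso_idem_orth).
  by rewrite -!mulmxA fUi !mulmxA.
exists (Y (s i) (s j)) => //; apply: contraTneq isT => Y0.
have F0 : F = 0.
  have -> : F = invmx U *m Y *m U by rewrite /Y !mulmxA mulVmx // mul1mx mulmxKV.
  by rewrite YE Y0 scale0r mulmx0 mul0mx.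
have : delta_mx i j = 0 :> 'M[k]_n.
  by apply: (iso_inj Phi_iso) => //; rewrite iso0.
by move/matrixP/(_ i j); rewrite !mxE !eqxx => /eqP; rewrite oner_eq0.
Qed.

Lemma align_rel i j : rho j i ->
  rho (s j) (s i) /\ h' (s j) = mul (mul (h j) (inv (h i))) (h' (s i)).
Proof.
move=> Hji; have Dij : incid rho (delta_mx i j : 'M[k]_n) by apply: supported_delta.
have [c c0 EY] := align_conj_iso_delta Hji.
have Y_ij : (U *m Phi (delta_mx i j) *m invmx U) (s i) (s j) != 0.
  by rewrite EY !mxE !eqxx mulr1.
have [Ui_incid Ui_homog] := Ui_incid_homog; split.
  have F_incid := iso_incid Phi_iso Dij.
  exact: incidM rho_preorder (incidM rho_preorder U_incid F_incid) Ui_incid _ _ Y_ij.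
have F_homog : homog mul h' (mul (h j) (inv (h i))) (Phi (delta_mx i j)).
  by apply/(iso_homog Phi_iso _ Dij); apply: (@homog_delta _ _ _ _ HG k n h i j).
have := homogM HG (homogM HG U_homog F_homog) Ui_homog Y_ij.
by rewrite (gmul1r HG) (gmul1l HG).
Qed.

Lemma rel_of_align_rel i j : rho (s j) (s i) -> rho j i.
Proof.
move=> Hs; apply: NNPP => nji.
have [Ui_incid _] := Ui_incid_homog.
pose Z := invmx U *m delta_mx (s i) (s j) *m U.
have Z_incid : incid rho Z.
  have D_incid : incid rho (delta_mx (s i) (s j) : 'M[k]_n).
    exact: (supported_delta (R := fun a b => rho b a) Hs).
  exact: incidM rho_preorder (incidM rho_preorder Ui_incid D_incid) U_incid.
have [X [X_incid PhiX]] := iso_surj Phi_iso Z_incid.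
have ZE : f i *m Z *m f j = Z.
  rewrite /Z !mulmxA fUi -!mulmxA (align_mxE iso_idem_orth) !mulmxA.
  rewrite -!mulmxA (mulmxA (delta_mx _ _)) mul_delta_mx.
  by rewrite (mulmxA (delta_mx _ _)) mul_delta_mx.
have X_ij : X i j = 0.
  by apply/eqP; apply: contra_notT nji => /X_incid.
have Z0 : Z = 0.
  by rewrite -ZE -PhiX -iso_sandwich // delta_mx_sandwich X_ij scale0r iso0.
have : delta_mx (s i) (s j) = 0 :> 'M[k]_n.
  have -> : delta_mx (s i) (s j) = U *m Z *m invmx U.
    by rewrite /Z !mulmxA mulmxV // mul1mx mulmxK.
  by rewrite Z0 mulmx0 mul0mx.
by move/matrixP/(_ (s i) (s j)); rewrite !mxE !eqxx => /eqP; rewrite oner_eq0.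
Qed.

End Aligned.

Lemma incidence_iso_perm : exists s : 'S_n,
  (forall i j, rho (s j) (s i) = rho j i) /\
  (forall i j, rho j i -> h' (s j) = mul (mul (h j) (inv (h i))) (h' (s i))).
Proof.
have [s U_unit] := exists_align_unit iso_idem_orth iso_idem_sum iso_idem_neq0 iso_idem_rank1.
exists s; split=> i j; last by case/(align_rel U_unit).
by apply/idP/idP => [/(rel_of_align_rel U_unit)|/(align_rel U_unit) []].
Qed.

End IncidenceIsoPerm.

Lemma exists_perm_on_restr (T : finType) (p : {perm T}) (b : {set T}) :
  {subset b <= [pred x | p x \in b]} ->
  exists q : {perm T}, perm_on b q /\ {in b, q =1 p}.
Proof.
move=> pb; pose q x := if x \in b then p x else x.
have q_inj : injective q.
  move=> x y; rewrite /q.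
  case: (boolP (x \in b)) => Hx; case: (boolP (y \in b)) => Hy //.
  - exact: perm_inj.
  - by move=> E; move: (pb _ Hx); rewrite inE E (negbTE Hy).
  - by move=> E; move: (pb _ Hy); rewrite inE -E (negbTE Hx).
exists (perm q_inj); split.
- by apply/subsetP => x; rewrite inE permE /q; case: ifP => // _; rewrite eqxx.
- by move=> x Hx; rewrite permE /q Hx.
Qed.

(* The orbit relation, read as a relabelling t of the basis that preserves rho and
   changes degrees by a factor constant along rho. *)
Definition graded_perm n (rho : rel 'I_n) G (mul : G -> G -> G) (h h' : 'I_n -> G)
    (t : 'S_n) : Prop :=
  (forall a b, rho (t a) (t b) = rho a b) /\
  exists d : 'I_n -> G,
    (forall a b, rho a b -> d a = d b) /\ forall i, h' i = mul (h (t i)) (d i).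

Section GradedPerm.
Variables (n : nat) (rho : rel 'I_n).
Hypothesis rho_preorder : preorder_rel rho.
Variables (G : Type) (mul : G -> G -> G) (one : G) (inv : G -> G).
Hypothesis HG : is_group mul one inv.
Variables (h h' : 'I_n -> G).

Lemma graded_perm_of_incidence_iso (k : fieldType) (Phi : 'M[k]_n -> 'M[k]_n) :
  incidence_iso rho mul h h' Phi -> exists t, graded_perm rho mul h h' t.
Proof.
move=> Phi_iso; have [s [s_rho s_deg]] := incidence_iso_perm rho_preorder HG Phi_iso.
exists s^-1%g; have t_rho a b : rho (s^-1%g a) (s^-1%g b) = rho a b.
  by rewrite -s_rho !permKV.
split=> //; exists (fun x => mul (inv (h (s^-1%g x))) (h' x)); split.
- move=> a b Hab; have := s_deg (s^-1%g b) (s^-1%g a); rewrite t_rho !permKV.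
  by move=> /(_ Hab) ->; rewrite -(gmulA HG) (gmulKl HG).
- by move=> i; rewrite (gmulKVl HG).
Qed.

Lemma incidence_iso_of_graded_perm (k : fieldType) t : graded_perm rho mul h h' t ->
  exists Phi : 'M[k]_n -> 'M[k]_n, incidence_iso rho mul h h' Phi.
Proof.
case=> t_rho [d [d_rho h'E]].
have t_incid (M : 'M[k]_n) : incid rho M -> incid rho (\matrix_(a, b) M (t a) (t b)).
  by move=> HM a b; rewrite mxE => /HM; rewrite t_rho.
exists (fun M => \matrix_(a, b) M (t a) (t b)); split.
- exact: t_incid.
- move=> M1 M2 _ _ /matrixP E; apply/matrixP => x y.
  by have := E (t^-1%g x) (t^-1%g y); rewrite !mxE !permKV.
- move=> M' HM'; exists (\matrix_(x, y) M' (t^-1%g x) (t^-1%g y)); split.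
  + by move=> x y; rewrite mxE => /HM'; rewrite -t_rho !permKV.
  + by apply/matrixP => a b; rewrite !mxE !permK.
- by move=> c M1 M2 _ _; apply/matrixP => a b; rewrite !mxE.
- move=> M1 M2 _ _; apply/matrixP => a b; rewrite !mxE.
  by rewrite (reindex_inj (@perm_inj _ t)); apply: eq_bigr => c _; rewrite !mxE.
- by apply/matrixP => a b; rewrite !mxE (inj_eq perm_inj).
- move=> s M HM; split=> HS a b; rewrite ?mxE => Mab.
  + have /HM : M (t a) (t b) != 0 by [].
    rewrite t_rho => Hba.
    by rewrite !h'E (HS _ _ Mab) (d_rho _ _ Hba) (gmulA HG).
  + have Hba : rho (t^-1%g b) (t^-1%g a) by rewrite -t_rho !permKV; apply: HM.
    have := HS (t^-1%g a) (t^-1%g b); rewrite mxE !permKV => /(_ Mab).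
    by rewrite !h'E !permKV (d_rho _ _ Hba) (gmulA HG); apply: (gmulIr HG).
Qed.

Lemma same_orbitE :
  same_orbit rho mul h h' <->
  exists (psi : {set 'I_n} -> {perm 'I_n}) (g : {set 'I_n} -> {set 'I_n})
         (sigma : {set {set 'I_n}} -> G),
    Sfam rho psi /\ Aut0 rho g /\
    forall i, h' i = mul (h (psi (g (cls rho i)) (gtilde rho g i))) (sigma (component rho i)).
Proof.
split=> -[psi [g [sigma [Hpsi [Hg Hh]]]]]; exists psi, g, sigma; do 2!split => //.
- by move=> i; rewrite Hh /Defs.act /actG /actAut /actS /= (cls_gtilde rho_preorder Hg).
- apply: functional_extensionality => i.
  by rewrite Hh /Defs.act /actG /actAut /actS /= (cls_gtilde rho_preorder Hg).
Qed.

Section PermClasses.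
Variable t : 'S_n.
Hypothesis t_rho : forall a b, rho (t a) (t b) = rho a b.

Lemma imset_perm_cls i : t @: cls rho i = cls rho (t i).
Proof.
apply/setP => y; apply/imsetP/idP => [[x Hx ->]|Hy].
- by move: Hx; rewrite !inE !t_rho.
- exists (t^-1%g y); rewrite ?permKV //.
  by move: Hy; rewrite !inE -(t_rho i) -(t_rho _ i) permKV.
Qed.

Lemma imset_perm_Aut0 : Aut0 rho (fun a => t @: a).
Proof.
split; [|split; [|split]].
- by move=> a /classesP [x ->]; rewrite imset_perm_cls cls_in_classes.
- move=> a b /classesP [x ->] /classesP [y ->]; rewrite !imset_perm_cls.
  move/(eq_cls rho_preorder); rewrite !t_rho => -[Hxy Hyx].
  by apply: (cls_of_mem rho_preorder); rewrite inE Hxy Hyx.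
- move=> a b /classesP [x ->] /classesP [y ->].
  by rewrite !imset_perm_cls !cle_cls.
- by move=> a _; rewrite card_imset //; apply: perm_inj.
Qed.

End PermClasses.

Lemma exists_Sfam (P : 'S_n) : (forall x, cls rho (P x) = cls rho x) ->
  exists psi, Sfam rho psi /\ forall x, psi (cls rho x) x = P x.
Proof.
move=> P_cls.
have [psi Hpsi] : exists psi : {set 'I_n} -> {perm 'I_n}, forall b,
    b \in Defs.classes rho -> perm_on b (psi b) /\ {in b, psi b =1 P}.
  apply: (@fin_all_exists _ (fun _ => {perm 'I_n}) (fun b q =>
    b \in Defs.classes rho -> perm_on b q /\ {in b, q =1 P})) => b.
  have [/classesP [y ->]|_] := boolP (b \in Defs.classes rho); last by exists 1%g.
  have [q Hq] : exists q : {perm 'I_n}, perm_on (cls rho y) q /\ {in cls rho y, q =1 P}.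
    apply: exists_perm_on_restr => x Hx.
    by rewrite inE -(cls_of_mem rho_preorder Hx) -P_cls (mem_cls rho_preorder).
  by exists q.
exists psi; split=> [a /Hpsi [] //|x].
by have [_ ->] := Hpsi _ (cls_in_classes rho x); rewrite ?mem_cls.
Qed.

Lemma exists_component_fun (d : 'I_n -> G) : (forall a b, rho a b -> d a = d b) ->
  exists sigma, forall i, sigma (component rho i) = d i.
Proof.
move=> d_rho.
exists (fun c => if [pick x | component rho x == c] is Some x then d x else one) => i.
case: pickP => [x /eqP Exi|/(_ i)]; last by rewrite eqxx.
exact: component_const Exi.
Qed.

Lemma same_orbit_of_graded_perm t :
  graded_perm rho mul h h' t -> same_orbit rho mul h h'.
Proof.
case=> t_rho [d [d_rho h'E]].
have g_Aut0 := imset_perm_Aut0 t_rho; set g := (fun a => _) in g_Aut0.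
pose gt := perm (gtilde_inj rho_preorder g_Aut0).
have Psi_gtilde i : (gt^-1 * t)%g (gtilde rho g i) = t i.
  by rewrite permM -[gtilde rho g i](permE (gtilde_inj rho_preorder g_Aut0)) permK.
have Psi_cls x : cls rho ((gt^-1 * t)%g x) = cls rho x.
  have -> : x = gtilde rho g (gt^-1%g x).
    by rewrite -[RHS](permE (gtilde_inj rho_preorder g_Aut0)) permKV.
  by rewrite Psi_gtilde (cls_gtilde rho_preorder g_Aut0) /g imset_perm_cls.
have [psi [Hpsi psiE]] := exists_Sfam Psi_cls.
have [sigma sigmaE] := exists_component_fun d_rho.
apply/same_orbitE; exists psi, g, sigma; split=> //; split=> // i.
by rewrite -(cls_gtilde rho_preorder g_Aut0) psiE Psi_gtilde sigmaE.
Qed.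

Lemma graded_perm_of_same_orbit :
  same_orbit rho mul h h' -> exists t, graded_perm rho mul h h' t.
Proof.
case/same_orbitE => psi [g [sigma [Hpsi [g_Aut0 h'E]]]].
pose tau i := psi (g (cls rho i)) (gtilde rho g i).
have g_cls i : g (cls rho i) \in Defs.classes rho.
  by case: g_Aut0 => g_classes _; apply/g_classes/cls_in_classes.
have tau_cls i : cls rho (tau i) = g (cls rho i).
  rewrite -(cls_gtilde rho_preorder g_Aut0); apply: (cls_of_mem rho_preorder).
  by rewrite (cls_gtilde rho_preorder g_Aut0) (perm_closed _ (Hpsi _ (g_cls i))) gtilde_mem.
have tau_inj : injective tau.
  move=> i j E; have Eg : g (cls rho i) = g (cls rho j) by rewrite -!tau_cls E.
  by move: E; rewrite /tau Eg => /perm_inj /(gtilde_inj rho_preorder g_Aut0).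
exists (perm tau_inj); split.
  move=> a b; rewrite !permE -!(cle_cls rho_preorder) !tau_cls.
  by case: g_Aut0 => _ [_ [g_cle _]]; rewrite g_cle ?cls_in_classes.
exists (fun i => sigma (component rho i)); split=> [a b /(component_rel rho_preorder) -> //|i].
by rewrite permE h'E.
Qed.

End GradedPerm.

Theorem theorem7p1 (k : fieldType) (G : Type) (mul : G -> G -> G) (one : G)
  (inv : G -> G) (HG : is_group mul one inv)
  (n : nat) (rho : rel 'I_n) (Hrho : preorder_rel rho)
  (B : 'M[k]_n) (HB : B \in unitmx) (h h' : 'I_n -> G) :
  (graded_iso rho B mul h h' <-> same_orbit rho mul h h') /\
  (same_orbit rho mul h h' <->
     exists (psi : {set 'I_n} -> {perm 'I_n}) (g : {set 'I_n} -> {set 'I_n})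
            (sigma : {set {set 'I_n}} -> G),
       Sfam rho psi /\ Aut0 rho g /\
       forall i : 'I_n,
         h' i = mul (h (psi (g (cls rho i)) (gtilde rho g i)))
                    (sigma (component rho i))).
Proof.
split; last exact: same_orbitE.
have orbit_perm : same_orbit rho mul h h' <-> exists t, graded_perm rho mul h h' t.
  split; first exact: graded_perm_of_same_orbit.
  by case=> t; apply: (same_orbit_of_graded_perm Hrho one (t := t)).
rewrite orbit_perm; split.
- by case/(incidence_iso_of_graded HB Hrho) => Phi /(graded_perm_of_incidence_iso Hrho HG).
- by case=> t /(incidence_iso_of_graded_perm HG k) [Phi] /(graded_iso_of_incidence HB Hrho).
Qed.
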